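(* Let $n\ge1$ and $P=\Phi^+(B_n)=\{(i,j)\colon 1\le i\le j\le 2n-1,\ i+j\ge 2n\}$. Then for $k=2,4,\dots,2n-2$ we have \[2\sum_{\substack{(i,j)\in P\\ j-i=k}}\mathbb{1}_{(i,j)}-\sum_{\substack{(i,j)\in P\\ j-i=k-1}}\mathbb{1}_{(i,j)}-\sum_{\substack{(i,j)\in P\\ j-i=k+1}}\mathbb{1}_{(i,j)}\equiv 1,\] and furthermore \[2\sum_{(i,i)\in P}\mathbb{1}_{(i,i)}-2\sum_{(i,i+1)\in P}\mathbb{1}_{(i,i+1)}\equiv 1.\]
   Context: $P$ is ordered by $(i,j)\le(i',j')$ iff $i\le i'$ and $j\le j'$. $\mathcal{J}(P)$ is the set of order ideals of $P$. For $x\in P$, $I\in\mathcal{J}(P)$: $\mathbb{1}_x(I)=1$ if $x\in I$, else $0$; $T_x^+(I)=1$ if $x$ is a minimal element of $P\setminus I$, else $0$; $T_x^-(I)=1$ if $x$ is a maximal element of $I$, else $0$; $T_x=T_x^+-T_x^-$. For $f,g\colon\mathcal{J}(P)\to\mathbb{R}$, $f\equiv g$ means $f-g=\sum_{x\in P}c_xT_x$ for some real constants $c_x$; a real number denotes the corresponding constant function. *)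

From HB Require Import structures.
From mathcomp Require Import all_boot all_order all_algebra.
Set Implicit Arguments. Unset Strict Implicit. Unset Printing Implicit Defensive.
Import Order.TTheory GRing.Theory Num.Theory.

Definition pos (n : nat) : finType := ('I_(2 * n) * 'I_(2 * n))%type.

Definition leP (n : nat) (x y : pos n) : bool :=
  ((x.1 : nat) <= y.1) && ((x.2 : nat) <= y.2).

Definition inP (n : nat) (x : pos n) : bool :=
  [&& 1 <= (x.1 : nat), (x.1 : nat) <= x.2, (x.2 : nat) <= 2 * n - 1
    & 2 * n <= (x.1 : nat) + x.2].

Definition Pset (n : nat) : {set pos n} := [set x | inP x].

Definition is_ideal (n : nat) (I : {set pos n}) : bool :=
  (I \subset Pset n) &&
  [forall x, forall y, [&& x \in I, y \in Pset n & leP y x] ==> (y \in I)].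

Section Funs.
Variable R : realFieldType.
Local Open Scope ring_scope.

Definition ind (n : nat) (x : pos n) (I : {set pos n}) : R :=
  if x \in I then 1 else 0.

Definition Tplus (n : nat) (x : pos n) (I : {set pos n}) : R :=
  if [&& x \in Pset n, x \notin I &
        [forall y, [&& y \in Pset n, y \notin I & leP y x] ==> (y == x)]]
  then 1 else 0.

Definition Tminus (n : nat) (x : pos n) (I : {set pos n}) : R :=
  if [&& x \in I & [forall y, [&& y \in I & leP x y] ==> (y == x)]]
  then 1 else 0.

Definition toggle (n : nat) (x : pos n) (I : {set pos n}) : R :=
  Tplus x I - Tminus x I.

(* f == g on J(P): f - g is a real linear combination of the toggles T_x,
   x in P, as functions on the order ideals of P. *)
Definition tequiv (n : nat) (f g : {set pos n} -> R) : Prop :=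
  exists c : pos n -> R, forall I : {set pos n}, is_ideal I ->
    f I - g I = \sum_(x in Pset n) c x * toggle x I.

Definition diagsum (n d : nat) (I : {set pos n}) : R :=
  \sum_(x in Pset n | (x.2 : nat) == (x.1 + d)%N) ind x I.
End Funs.

(* Write D_d for the number of elements of an order ideal on the diagonal
   j - i = d.  The toggles T^+ at X' = (i+1, i+k+1) and T^- at X = (i, i+k)
   sit at opposite corners of a unit square whose other corners
   Y = (i, i+k+1) and Z = (i+1, i+k) lie on the diagonals k+1 and k-1.
   Checking the finitely many ideals of that square gives
   T^+_X' - T^-_X = 1_Y + 1_Z - 1_X - 1_X', up to an extra 1 on the unique
   square where X' lies in P but X does not (this is where k even is used).
   Summing over i, the toggles along the diagonal k add up to
   D_(k+1) + D_(k-1) - 2 D_k + 1.  On the main diagonal Z falls outside P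
   and Y is the only cover of X, so it counts twice: 2 D_1 - 2 D_0 + 1. *)

From Pilot Require Import Defs.
From mathcomp Require Import all_boot all_order all_algebra.
From mathcomp Require Import zify lra.
Import GRing.Theory.
Set Implicit Arguments. Unset Strict Implicit. Unset Printing Implicit Defensive.

(* P and I read on nat coordinates, so that grid neighbours such as
   (i.-1, j) need no bound checks: both are false off the grid, and the
   truncation 0.-1 = 0 is harmless since column 0 is outside P. *)
Definition inPn (n i j : nat) : bool :=
  [&& 1 <= i, i <= j, j <= 2 * n - 1 & 2 * n <= i + j].

Definition memI n (I : {set pos n}) (i j : nat) : bool :=
  [exists x in I, ((x.1 : nat) == i) && ((x.2 : nat) == j)].

Definition min_outside n (I : {set pos n}) (i j : nat) : bool :=
  [&& inPn n i j, ~~ memI I i j, inPn n i.-1 j ==> memI I i.-1 j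
    & inPn n i j.-1 ==> memI I i j.-1].

Definition max_inside n (I : {set pos n}) (i j : nat) : bool :=
  [&& memI I i j, inPn n i.+1 j ==> ~~ memI I i.+1 j
    & inPn n i j.+1 ==> ~~ memI I i j.+1].

Lemma inPn_lower_cover n a b c d :
  inPn n a b -> inPn n c d -> c <= a -> d <= b -> (c < a) || (d < b) ->
  (inPn n a.-1 b && (c <= a.-1)) || (inPn n a b.-1 && (d <= b.-1)).
Proof. rewrite /inPn; lia. Qed.

Lemma inPn_upper_cover n a b c d :
  inPn n a b -> inPn n c d -> a <= c -> b <= d -> (a < c) || (b < d) ->
  (inPn n a.+1 b && (a.+1 <= c)) || (inPn n a b.+1 && (b.+1 <= d)).
Proof. rewrite /inPn; lia. Qed.

Section Positions.
Variable n : nat.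
Implicit Types (x y : pos n) (I : {set pos n}).

Lemma pos_eq x y : x.1 = y.1 :> nat -> x.2 = y.2 :> nat -> x = y.
Proof. by case: x y => [a b] [c d] /= /val_inj-> /val_inj->. Qed.

Lemma leP_neq_lt x y : Defs.leP y x -> y != x -> (y.1 < x.1) || (y.2 < x.2).
Proof.
case/andP=> le1 le2; apply: contraR; rewrite negb_or -!leqNgt => /andP[ge1 ge2].
by apply/eqP/pos_eq; apply/eqP; rewrite eqn_leq ?le1 ?le2.
Qed.

Lemma pos_of_inPn i j : inPn n i j -> {x : pos n | x.1 = i :> nat /\ x.2 = j :> nat}.
Proof.
rewrite /inPn => Pij.
have ltn_i : i < 2 * n by lia.
have ltn_j : j < 2 * n by lia.
by exists (Ordinal ltn_i, Ordinal ltn_j).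
Qed.

Lemma memIE I x : memI I x.1 x.2 = (x \in I).
Proof.
apply/existsP/idP => [[y /andP[yI /andP[/eqP e1 /eqP e2]]] | xI].
  by rewrite -(pos_eq e1 e2).
by exists x; rewrite xI !eqxx.
Qed.

Section Ideal.
Variable I : {set pos n}.
Hypothesis idealI : is_ideal I.

Lemma memI_inPn i j : memI I i j -> inPn n i j.
Proof.
case/existsP=> x /andP[xI /andP[/eqP <- /eqP <-]].
by case/andP: idealI => /subsetP/(_ x xI); rewrite inE.
Qed.

Lemma memI_outside i j : ~~ inPn n i j -> memI I i j = false.
Proof. by apply: contraNF; apply: memI_inPn. Qed.

Lemma memI_down a b c d : inPn n a b -> memI I c d -> a <= c -> b <= d -> memI I a b.
Proof.
move=> Pab /existsP[x /andP[xI /andP[/eqP <- /eqP <-]]] le1 le2.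
have [y [ya yb]] := pos_of_inPn Pab; subst a b.
rewrite memIE; case/andP: idealI => _ /forallP/(_ x)/forallP/(_ y)/implyP; apply.
by rewrite xI inE /Defs.leP le1 le2 !andbT.
Qed.

Lemma minimal_outsideE x :
  [&& x \in Pset n, x \notin I &
      [forall y, [&& y \in Pset n, y \notin I & Defs.leP y x] ==> (y == x)]]
  = min_outside I x.1 x.2.
Proof.
rewrite /min_outside inE memIE.
apply/and3P/and4P => [[Px xI /forallP minx] | [Px xI low1 low2]].
  have below_in a b : inPn n a b -> a <= x.1 -> b <= x.2 -> (a < x.1) || (b < x.2) ->
      memI I a b.
    move=> Pab le1 le2 lt; apply: contraT => abI.
    have [y [ya yb]] := pos_of_inPn Pab; subst a b.
    have /eqP yx : y == x.
      by apply: (implyP (minx y)); rewrite inE -memIE abI /Defs.leP le1 le2 !andbT.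
    by move: lt; rewrite yx !ltnn.
  split=> //; apply/implyP => Pc; apply: below_in => //; move: Px Pc; rewrite /inP /inPn; lia.
split=> //; apply/forallP => y; apply/implyP; rewrite inE => /and3P[Py yI leyx].
apply: contraT => /(leP_neq_lt leyx); case/andP: leyx => le1 le2.
move/(inPn_lower_cover Px Py le1 le2); case/orP => /andP[Pc lec].
  by move: yI; rewrite -memIE (memI_down Py (implyP low1 Pc) lec le2).
by move: yI; rewrite -memIE (memI_down Py (implyP low2 Pc) le1 lec).
Qed.

Lemma maximal_insideE x :
  [&& x \in I & [forall y, [&& y \in I & Defs.leP x y] ==> (y == x)]]
  = max_inside I x.1 x.2.
Proof.
rewrite /max_inside -memIE.
apply/andP/and3P => [[xI /forallP maxx] | [xI up1 up2]].
  have Px := memI_inPn xI.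
  have above_out a b : inPn n a b -> x.1 <= a -> x.2 <= b -> (x.1 < a) || (x.2 < b) ->
      ~~ memI I a b.
    move=> Pab le1 le2 lt; apply/negP => abI.
    have [y [ya yb]] := pos_of_inPn Pab; subst a b.
    have /eqP yx : y == x by apply: (implyP (maxx y)); rewrite -memIE abI /Defs.leP le1 le2.
    by move: lt; rewrite yx !ltnn.
  split=> //; apply/implyP => Pc; apply: above_out => //; move: Px Pc; rewrite /inPn; lia.
split=> //; apply/forallP => y; apply/implyP; rewrite -memIE => /andP[yI lexy].
have [Px Py] := (memI_inPn xI, memI_inPn yI).
apply: contraT; rewrite eq_sym => /(leP_neq_lt lexy); case/andP: lexy => le1 le2.
move/(inPn_upper_cover Px Py le1 le2); case/orP => /andP[Pc lec].
  by move: up1; rewrite (memI_down Pc yI lec le2) Pc.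
by move: up2; rewrite (memI_down Pc yI le1 lec) Pc.
Qed.

End Ideal.
End Positions.

Local Open Scope ring_scope.

Lemma sum_diag_ord (V : nmodType) (m d : nat) (G : nat -> nat -> V) :
  (forall i j, (m <= j)%N -> G i j = 0) ->
  \sum_(x : 'I_m * 'I_m | (x.2 : nat) == (x.1 + d)%N) G x.1 x.2
  = \sum_(0 <= i < m) G i (i + d)%N.
Proof.
move=> G0; rewrite big_mkcond big_mkord.
transitivity (\sum_(i < m) \sum_(j < m) if (j : nat) == (i + d)%N then G i j else 0).
  by rewrite pair_bigA.
apply: eq_bigr => i _; case: (ltnP (i + d) m) => [lt | ge].
  rewrite (bigD1 (Ordinal lt)) //= eqxx big1 ?addr0 // => j.
  by rewrite -(inj_eq val_inj) => /negPf ->.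
by rewrite G0 // big1 // => j _; rewrite ltn_eqF // (leq_trans (ltn_ord j) ge).
Qed.

Lemma sum_nat_shift (V : nmodType) (f : nat -> V) N :
  f 0%N = 0 -> f N = 0 -> \sum_(0 <= i < N) f i = \sum_(0 <= i < N) f i.+1.
Proof.
move=> f0 fN; transitivity (\sum_(0 <= i < N.+1) f i).
  by rewrite big_nat_recr //= fN addr0.
by rewrite big_nat_recl //= f0 add0r.
Qed.

(* The corners X = (i, j), Y = (i, j+1), Z = (i+1, j), X' = (i+1, j+1) of a
   unit square of the grid: pA says A is in P, mA says A is in the ideal. *)
Lemma toggle_square (R : pzRingType) (pX pY pZ pX' mX mY mZ mX' : bool) :
  mX ==> pX -> mY ==> pY -> mZ ==> pZ -> mX' ==> pX' ->
  pY ==> (mX' ==> mY) -> pZ ==> (mX' ==> mZ) ->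
  pX ==> (mY ==> mX) -> pX ==> (mZ ==> mX) ->
  pY = pX && pX' -> pZ ==> pX -> pX && pX' ==> pZ ->
  [&& pX', ~~ mX', pY ==> mY & pZ ==> mZ]%:R - [&& mX, pZ ==> ~~ mZ & pY ==> ~~ mY]%:R
  = mY%:R + mZ%:R - mX%:R - mX'%:R + (pX' && ~~ pX)%:R :> R.
Proof.
by case: pX pY pZ pX' mX mY mZ mX' => [] [] [] [] [] [] [] [] //= *;
  rewrite ?(subr0, sub0r, addr0, add0r, addrK, subrr, addNr).
Qed.

(* The square on the main diagonal: Z = (i+1, i) is not in P, and Y = (i, i+1)
   is both the only upper cover of X and the only lower cover of X'. *)
Lemma toggle_square_degenerate (R : pzRingType) (pX pY pX' mX mY mX' : bool) :
  mX ==> pX -> mY ==> pY -> mX' ==> pX' ->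
  pY ==> (mX' ==> mY) -> pX ==> (mY ==> mX) -> pY = pX && pX' ->
  [&& pX', ~~ mX' & pY ==> mY]%:R - (mX && (pY ==> ~~ mY))%:R
  = mY%:R + mY%:R - mX%:R - mX'%:R + (pX' && ~~ pX)%:R :> R.
Proof.
move=> mPX mPY mPX' downY downX PY.
have PYX : pY ==> pX by rewrite PY; apply/implyP => /andP[].
have PXY : pX && pX' ==> pY by rewrite PY implybb.
by have := toggle_square R mPX mPY mPY mPX' downY downY downX downX PY PYX PXY; rewrite !andbb.
Qed.

Section DiagonalSums.
Variables (R : realFieldType) (n : nat) (I : {set pos n}).
Hypothesis idealI : is_ideal I.

Lemma diagsumE d : diagsum R d I = \sum_(0 <= i < 2 * n) (memI I i (i + d))%:R.
Proof.
rewrite /diagsum -(sum_diag_ord d (G := fun i j => (memI I i j)%:R)) => [|i j le_j]; last first.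
  by rewrite memI_outside // /inPn; lia.
rewrite big_mkcondl; apply: eq_bigr => x _; rewrite memIE /ind.
case/andP: idealI => /subsetP IP _.
by case: (boolP (x \in I)) => [/IP -> | _]; rewrite ?if_same.
Qed.

Lemma toggleE x :
  toggle R x I = (min_outside I x.1 x.2)%:R - (max_inside I x.1 x.2)%:R.
Proof.
rewrite /toggle /Tplus /Tminus minimal_outsideE // maximal_insideE //.
by case: min_outside; case: max_inside.
Qed.

Lemma diag_toggle_sumE k :
  \sum_(x in Pset n) ((x.2 : nat) == (x.1 + k)%N)%:R * toggle R x I
  = \sum_(0 <= i < 2 * n) ((min_outside I i (i + k))%:R - (max_inside I i (i + k))%:R).
Proof.
have toggle0 i j : ~~ inPn n i j -> (min_outside I i j)%:R - (max_inside I i j)%:R = 0 :> R.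
  by move=> Pij; rewrite /min_outside /max_inside (negbTE Pij) memI_outside // subr0.
rewrite -(sum_diag_ord k (G := fun i j => (min_outside I i j)%:R - (max_inside I i j)%:R))
  => [|i j le_j]; last by rewrite toggle0 // /inPn; lia.
rewrite big_mkcond [RHS]big_mkcond; apply: eq_bigr => x _; rewrite toggleE.
case: (boolP (x \in Pset n)) => [_ | ]; first by case: eqP; rewrite ?mul1r ?mul0r.
by rewrite inE => /toggle0->; rewrite if_same.
Qed.

Lemma diag_toggle_square k i : ~~ odd k -> (k <= 2 * n - 2)%N ->
  (min_outside I i.+1 (i + k).+1)%:R - (max_inside I i (i + k))%:R
  = (memI I i (i + k).+1)%:R
    + (if k is 0 then memI I i i.+1 else memI I i.+1 (i + k))%:R
    - (memI I i (i + k))%:R - (memI I i.+1 (i + k).+1)%:R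
    + (i.*2 + k.+2 == n.*2)%:R :> R.
Proof.
move=> evk le_k; have k2 := odd_double_half k; rewrite (negbTE evk) add0n in k2.
have boundary : (inPn n i.+1 (i + k).+1 && ~~ inPn n i (i + k)) = (i.*2 + k.+2 == n.*2)%N.
  by rewrite /inPn; apply/idP/idP; lia.
rewrite -boundary /min_outside /max_inside /=.
case: k evk le_k k2 {boundary} => [|k'] evk le_k k2; last apply: toggle_square.
  rewrite !addn0 (_ : inPn n i.+1 i = false) /= ?andbT; last by rewrite /inPn; lia.
  apply: toggle_square_degenerate.
all: try (apply/implyP; exact: memI_inPn).
all: try (apply/implyP => P; apply/implyP => /(memI_down idealI P); apply; lia).
all: rewrite /inPn; try (apply/idP/idP); lia.
Qed.

Lemma diag_toggle_sum_nat k : (0 < n)%N -> ~~ odd k -> (k <= 2 * n - 2)%N ->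
  \sum_(0 <= i < 2 * n) ((min_outside I i (i + k))%:R - (max_inside I i (i + k))%:R)
  = \sum_(0 <= i < 2 * n) (memI I i (i + k.+1))%:R
    + \sum_(0 <= i < 2 * n) (if k is 0 then memI I i i.+1 else memI I i.+1 (i + k))%:R
    - (\sum_(0 <= i < 2 * n) (memI I i (i + k))%:R) *+ 2 + 1 :> R.
Proof.
move=> n_gt0 evk le_k; have k2 := odd_double_half k; rewrite (negbTE evk) add0n in k2.
rewrite sumrB (sum_nat_shift (f := fun i => (min_outside I i (i + k))%:R)) //; last first.
  by rewrite /min_outside (_ : inPn n (2 * n) _ = false) // /inPn; lia.
rewrite -sumrB; under eq_bigr => i _ do rewrite addSn diag_toggle_square //.
have shiftX : \sum_(0 <= i < 2 * n) (memI I i.+1 (i + k).+1)%:R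
              = \sum_(0 <= i < 2 * n) (memI I i (i + k))%:R :> R.
  rewrite (sum_nat_shift (f := fun i => (memI I i (i + k))%:R)) // memI_outside //.
  by rewrite /inPn; lia.
have boundary1 : \sum_(0 <= i < 2 * n) (i.*2 + k.+2 == n.*2)%:R = 1 :> R.
  transitivity (\sum_(0 <= i < 2 * n | i == (n.-1 - k./2)%N) 1 : R).
    rewrite [RHS]big_mkcond; apply: eq_bigr => i _.
    by rewrite (_ : (_ == _) = (i == n.-1 - k./2)%N); [case: eqP | apply/idP/idP; lia].
  by rewrite big_nat1_eq ifT //; lia.
rewrite big_split !sumrB big_split shiftX boundary1 mulr2n opprD addrA.
by congr (_ + _ - _ - _ + _); apply: eq_bigr => i _; rewrite addnS.
Qed.

Lemma diag_toggle_sum k : (0 < n)%N -> ~~ odd k -> (k <= 2 * n - 2)%N ->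
  \sum_(x in Pset n) ((x.2 : nat) == (x.1 + k)%N)%:R * toggle R x I
  = diagsum R k.+1 I + diagsum R (if k is 0 then 1 else k.-1) I - diagsum R k I *+ 2 + 1.
Proof.
move=> n_gt0 evk le_k; rewrite diag_toggle_sumE diag_toggle_sum_nat // !diagsumE //.
suff -> : \sum_(0 <= i < 2 * n) (if k is 0 then memI I i i.+1 else memI I i.+1 (i + k))%:R
  = \sum_(0 <= i < 2 * n) (memI I i (i + if k is 0 then 1 else k.-1))%:R :> R by [].
case: k evk le_k => [|k] _ le_k.
  by apply: eq_bigr => i _; rewrite addn1.
rewrite (sum_nat_shift (f := fun i => (memI I i (i + k))%:R)).
  by apply: eq_bigr => i _; rewrite addSn addnS.
all: by rewrite memI_outside // /inPn; lia.
Qed.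

End DiagonalSums.

Lemma tequiv_diag (R : realFieldType) n k : (0 < n)%N -> ~~ odd k -> (k <= 2 * n - 2)%N ->
  tequiv (fun I : {set pos n} =>
            2 * diagsum R k I - diagsum R (if k is 0 then 1 else k.-1) I - diagsum R k.+1 I)
         (fun _ => 1).
Proof.
move=> n_gt0 evk le_k; exists (fun x : pos n => - ((x.2 : nat) == (x.1 + k)%N)%:R) => I idealI.
under eq_bigr do rewrite mulNr.
by rewrite sumrN diag_toggle_sum // mulr2n; lra.
Qed.

Theorem theorem3p37 (R : realFieldType) (n : nat) (hn : (1 <= n)%N) :
  (forall k : nat, (2 <= k)%N -> (k <= 2 * n - 2)%N -> ~~ odd k ->
     tequiv (fun I : {set pos n} =>
               2 * diagsum R k I - diagsum R k.-1 I - diagsum R k.+1 I)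
            (fun _ => 1))
  /\
  tequiv (fun I : {set pos n} => 2 * diagsum R 0 I - 2 * diagsum R 1 I)
         (fun _ => 1).
Proof.
split=> [[|k] // _ le_k evk | ]; first exact: tequiv_diag.
have [c diag0] := @tequiv_diag R n 0 hn isT (leq0n _).
by exists c => I idealI; rewrite -diag0 //=; lra.
Qed.
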